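(* Let $R$ be a right $\sigma$-reversible ring, where $\sigma$ is an endomorphism of $R$ with $\sigma(1)=1$. Then the set of idempotents of $R[[x;\sigma]]$ coincides with the set of idempotents of $R$ (viewed as constant series), and $R[[x;\sigma]]$ is abelian (all its idempotents are central).
   Context: All rings are associative with identity; $\sigma$ denotes a nonzero, non-identity ring endomorphism of $R$. The skew power series ring $R[[x;\sigma]]$ consists of all formal series $\sum_{i=0}^\infty a_i x^i$ with $a_i\in R$, added termwise and multiplied using distributivity and the rule $xa=\sigma(a)x$ for $a\in R$. $R$ is right $\sigma$-reversible if for all $a,b\in R$, $ab=0$ implies $b\sigma(a)=0$. *)

From HB Require Import structures.
From mathcomp Require Import all_boot all_order all_algebra.
Set Implicit Arguments. Unset Strict Implicit. Unset Printing Implicit Defensive.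
Import GRing.Theory.
Local Open Scope ring_scope.

(* Formal skew power series sum_i a_i x^i over R, represented by their
   coefficient sequence i |-> a_i. *)
Definition skew_series (R : nzRingType) := nat -> R.

Definition sadd (R : nzRingType) (f g : skew_series R) : skew_series R :=
  fun n => f n + g n.

(* Product in R[[x;sigma]]: (a x^i)(b x^j) = a sigma^i(b) x^(i+j), hence
   (f g)_n = sum_{i+j=n} f_i sigma^i(g_j). *)
Definition smul (R : nzRingType) (sigma : R -> R) (f g : skew_series R)
  : skew_series R :=
  fun n => \sum_(i < n.+1) f i * (iter i sigma) (g (n - i)%N).

Definition sconst (R : nzRingType) (a : R) : skew_series R :=
  fun n => if n == 0%N then a else 0.

Definition right_sigma_reversible (R : nzRingType) (sigma : R -> R) : Prop :=
  forall a b : R, a * b = 0 -> b * sigma a = 0.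

Definition idempotent_R (R : nzRingType) (e : R) : Prop := e * e = e.

Definition idempotent_S (R : nzRingType) (sigma : R -> R) (f : skew_series R)
  : Prop := smul sigma f f = f.

From HB Require Import structures.
From mathcomp Require Import all_boot all_order all_algebra.
From Stdlib Require Import FunctionalExtensionality.
Set Implicit Arguments.
Unset Strict Implicit.
Import GRing.Theory.
Local Open Scope ring_scope.

(* Everything rests on two facts about an idempotent e of R, obtained by
   feeding the products e(1-e) = (1-e)e = 0 (and their multiples by r) to
   right sigma-reversibility: sigma fixes e, and e is central in R.

   For a series f we compute the coefficients of the products with a constant
   series: (e f)_n = e f_n and (f e)_n = f_n sigma^n(e).  Hence a constant
   series built on an idempotent is idempotent, and it commutes with every
   series because sigma^n(e) = e and e is central.

   Conversely, if f is idempotent then e := f_0 is idempotent, and by strong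
   induction every higher coefficient a := f_(n+1) vanishes: the lower ones
   being zero, f f = f at degree n+1 reads e a + a e = a, and a Peirce-type
   argument using the centrality of e forces a = 0.  So f = sconst e. *)

(* A commuting idempotent e kills every a with e a + a e = a:
   then 2 ea = a, multiplying by e gives ea = a, hence 2a = a and a = 0. *)
Lemma idempotent_comm_peirce (R : nzRingType) (e a : R) :
  e * e = e -> e * a = a * e -> e * a + a * e = a -> a = 0.
Proof.
move=> ee ea_ae; rewrite -ea_ae => H.
have ea_a : e * a = a.
  by have := congr1 (fun x => e * x) H; rewrite /= mulrDr !mulrA ee H.
by apply: (@addrI _ a); rewrite addr0 -{1 2}ea_a H.
Qed.

Section ReversibleIdempotents.
Variables (R : nzRingType) (sigma : {rmorphism R -> R}).
Hypothesis hrev : right_sigma_reversible sigma.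

(* sigma fixes idempotents: reversibility of e(1-e) = 0 and (1-e)e = 0
   gives sigma e = e sigma e and e sigma e = e. *)
Lemma idempotent_sigma_fixed (e : R) : e * e = e -> sigma e = e.
Proof.
move=> ee.
have e_ce : e * (1 - e) = 0 by rewrite mulrBr mulr1 ee subrr.
have ce_e : (1 - e) * e = 0 by rewrite mulrBl mul1r ee subrr.
have := hrev e_ce; rewrite mulrBl mul1r => /eqP; rewrite subr_eq0 => /eqP ->.
have := hrev ce_e; rewrite rmorphB rmorph1 mulrBr mulr1 => /eqP.
by rewrite subr_eq0 => /eqP.
Qed.

(* Idempotents are central: reversibility of e((1-e)r) = 0 and
   (1-e)(er) = 0, together with sigma e = e, gives r e = e r e = e r. *)
Lemma idempotent_central (e : R) : e * e = e -> forall r, e * r = r * e.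
Proof.
move=> ee r; have se := idempotent_sigma_fixed ee.
have h1 : e * ((1 - e) * r) = 0 by rewrite mulrA mulrBr mulr1 ee subrr mul0r.
have h2 : (1 - e) * (e * r) = 0 by rewrite mulrA mulrBl mul1r ee subrr mul0r.
have := hrev h1; rewrite se mulrBl mul1r mulrBl => /eqP.
rewrite subr_eq0 => /eqP ->.
have := hrev h2; rewrite rmorphB rmorph1 se mulrBr mulr1 => /eqP.
by rewrite subr_eq0 => /eqP.
Qed.

End ReversibleIdempotents.

Section SeriesProducts.
Variables (R : nzRingType) (sigma : {rmorphism R -> R}).

Lemma smul_sconst_l (e : R) (g : skew_series R) n :
  smul sigma (sconst e) g n = e * g n.
Proof.
rewrite /smul big_ord_recl /= subn0 big1 ?addr0 // => i _.
by rewrite /sconst /= mul0r.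
Qed.

Lemma smul_sconst_r (e : R) (g : skew_series R) n :
  smul sigma g (sconst e) n = g n * iter n sigma e.
Proof.
rewrite /smul /sconst big_ord_recr /= subnn big1 ?add0r // => i _.
have -> : (n - i == 0)%N = false by rewrite subn_eq0 leqNgt ltn_ord.
by rewrite iter_fix ?rmorph0 ?mulr0.
Qed.

Lemma sconst_idempotent (e : R) :
  idempotent_R e -> idempotent_S sigma (sconst e).
Proof.
move=> ee; apply: functional_extensionality => n.
by rewrite smul_sconst_l /sconst; case: (n == 0)%N; rewrite ?mulr0.
Qed.

Lemma smul_coef_gap (f : skew_series R) n :
  (forall k, (k < n)%N -> f k.+1 = 0) ->
  smul sigma f f n.+1 = f 0%N * f n.+1 + f n.+1 * iter n.+1 sigma (f 0%N).
Proof.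
move=> gap; rewrite /smul big_ord_recl big_ord_recr /= subn0 subnn.
by rewrite big1 ?add0r // => i _; rewrite /bump /= gap ?mul0r.
Qed.

End SeriesProducts.

Lemma idempotent_series_const (R : nzRingType) (sigma : {rmorphism R -> R}) :
  right_sigma_reversible sigma ->
  forall f : skew_series R, idempotent_S sigma f ->
  idempotent_R (f 0%N) /\ f = sconst (f 0%N).
Proof.
move=> hrev f ff.
have ee : f 0%N * f 0%N = f 0%N.
  by have := congr1 (fun h => h 0%N) ff; rewrite /smul big_ord1.
have vanish : forall n, f n.+1 = 0.
  elim/ltn_ind => n IH.
  have := congr1 (fun h => h n.+1) ff; rewrite smul_coef_gap // => H.
  apply: (idempotent_comm_peirce ee); first exact: (idempotent_central hrev ee).
  by rewrite -[in RHS]H iter_fix // (idempotent_sigma_fixed hrev ee).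
split=> //; apply: functional_extensionality => -[|n]; [by [] | exact: vanish].
Qed.

Theorem lemma3p2 (R : nzRingType) (sigma : {rmorphism R -> R})
  (sigma_nonid : exists a : R, sigma a <> a)
  (hrev : right_sigma_reversible sigma) :
  (* idempotents of R[[x;sigma]] = idempotents of R as constant series *)
  (forall f : skew_series R,
     idempotent_S sigma f <-> exists e : R, idempotent_R e /\ f = sconst e) /\
  (* R[[x;sigma]] is abelian: idempotents are central *)
  (forall f g : skew_series R,
     idempotent_S sigma f -> smul sigma f g = smul sigma g f).
Proof.
have idempotents : forall f : skew_series R,
    idempotent_S sigma f <-> exists e : R, idempotent_R e /\ f = sconst e.
  move=> f; split; last by move=> [e [ee ->]]; exact: sconst_idempotent.
  by move=> /(idempotent_series_const hrev) ?; exists (f 0%N).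
split=> // f g /idempotents [e [ee ->]].
apply: functional_extensionality => n.
rewrite smul_sconst_l smul_sconst_r iter_fix ?(idempotent_sigma_fixed hrev ee) //.
exact: (idempotent_central hrev ee).
Qed.
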